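(* Let $G$ be a finitely generated free abelian group and $g,h\in G$ such that the subgroup $\langle g,h\rangle$ has rank $2$. Then for any choice of signs, $1\pm g$ and $1\pm h$ are relatively prime in the group ring $\mathbb{Z}[G]$.
   Context: $\mathbb{Z}[G]$ is the integral group ring of $G$ (a unique factorization domain); relatively prime means having no common non-unit factor. *)

(* The group ring Z[G] of the free abelian group G = Z^n,
   realised as finitely supported functions G -> int with convolution. *)
From HB Require Import structures.
From mathcomp Require Import all_boot all_order all_algebra.
From mathcomp Require Import finmap.
Set Implicit Arguments. Unset Strict Implicit. Unset Printing Implicit Defensive.
Import Order.TTheory GRing.Theory Num.Theory.
Local Open Scope ring_scope.

Definition FAb (n : nat) := 'rV[int]_n.

Definition ZG (n : nat) := {fsfun FAb n -> int with 0}.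

Definition gdelta n (g : FAb n) : ZG n := [fsfun x in [fset g]%fset => 1 | 0].

Definition gone n : ZG n := gdelta 0.

Definition gadd n (a b : ZG n) : ZG n :=
  [fsfun x in (finsupp a `|` finsupp b)%fset => a x + b x | 0].

Definition gopp n (a : ZG n) : ZG n := [fsfun x in finsupp a => - a x | 0].

Definition gmul n (a b : ZG n) : ZG n :=
  [fsfun x in [fset (u + v)%R | u in finsupp a, v in finsupp b]%fset =>
     \sum_(u <- finsupp a) a u * b (x - u) | 0].

Definition gdvd n (d a : ZG n) : Prop := exists c, gmul d c = a.
Definition gunit n (d : ZG n) : Prop := exists e, gmul d e = gone n.

Definition grelprime n (a b : ZG n) : Prop :=
  forall d, gdvd d a -> gdvd d b -> gunit d.

Definition onepm n (s : bool) (g : FAb n) : ZG n :=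
  gadd (gone n) (if s then gdelta g else gopp (gdelta g)).

Definition rank2 n (g h : FAb n) : Prop :=
  forall a b : int, a *: g + b *: h = 0 -> a = 0 /\ b = 0.

From HB Require Import structures.
From mathcomp Require Import all_boot all_order all_algebra.
From mathcomp Require Import finmap zify ring.
Set Implicit Arguments. Unset Strict Implicit. Unset Printing Implicit Defensive.
Import Order.TTheory GRing.Theory Num.Theory.
Local Open Scope ring_scope.

(* Let d be a common divisor of 1 ± [g] and 1 ± [h] in Z[G], G = Z^n.
   Leading-term argument: for a strict total order on G invariant under
   translation, the product of the maximal terms of d and c is the maximal
   term of dc, so it cannot cancel.  Refining an additive functional phi
   lexicographically by the coordinates gives such an order; applying the
   leading-term argument to phi and to -phi we get: if dc = f with f ≠ 0
   supported on ker phi, then phi is constant on the support of d (the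
   "level lemma").
   For f = 1 ± [g] we apply this to the 2x2 minors phi(z) = g_i z_j - g_j z_i,
   which vanish on 0 and g; hence any two support points x, y of d differ by a
   vector parallel to g.  As d also divides 1 ± [h], x - y is parallel to h
   too, and linear independence of g and h forces x = y.  So d = u[a] is a
   monomial; its coefficient u divides 1 in Z, hence d is a unit. *)

Section Evaluation.
Variable n : nat.
Implicit Types (c d e f : ZG n) (g x : FAb n).

Lemma gdeltaE g x : gdelta g x = if x == g then 1 else 0.
Proof. by rewrite /gdelta fsfunE in_fset1. Qed.

Lemma goneE x : gone n x = if x == 0 then 1 else 0.
Proof. exact: gdeltaE. Qed.

Lemma gaddE e f x : gadd e f x = e x + f x.
Proof.
rewrite /gadd fsfunE; case: ifP => // /negbT.
rewrite in_fsetU negb_or !mem_finsupp !negbK => /andP[/eqP -> /eqP ->].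
by rewrite addr0.
Qed.

Lemma goppE e x : gopp e x = - e x.
Proof.
rewrite /gopp fsfunE; case: ifP => // /negbT.
by rewrite mem_finsupp negbK => /eqP ->; rewrite oppr0.
Qed.

Lemma gmulE d c x : gmul d c x = \sum_(u <- finsupp d) d u * c (x - u).
Proof.
rewrite /gmul fsfunE; case: ifP => // /negbT Hx.
rewrite big_seq big1 // => u ud.
case: (eqVneq (c (x - u)) 0) => [-> | cx]; first by rewrite mulr0.
case/negP: Hx; rewrite -[x in x \in _](addrNK u) addrC.
by apply: in_imfset2 => //=; rewrite mem_finsupp.
Qed.

Lemma gmul_neq0 d c x : gmul d c x != 0 ->
  exists2 u, d u != 0 & c (x - u) != 0.
Proof.
rewrite gmulE.
case: (boolP (has [pred u | (d u != 0) && (c (x - u) != 0)] (finsupp d))).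
  by move=> /hasP[u _ /andP[]]; exists u.
move=> /hasPn none; case/negP; rewrite big_seq big1 // => u /none /=.
by rewrite negb_and !negbK => /orP[] /eqP ->; rewrite ?mul0r ?mulr0.
Qed.

(* A monomial u[a] dividing an element with a coefficient 1 is a unit:
   u divides 1 in Z, and u^-1[-a] is the inverse of u[a]. *)
Lemma monomial_gunit d c (a z : FAb n) : (forall x, d x != 0 -> x = a) ->
  gmul d c z = 1 -> gunit d.
Proof.
move=> supp_d dcz.
have [u du _] : exists2 u, d u != 0 & c (z - u) != 0.
  by apply: gmul_neq0; rewrite dcz oner_neq0.
have da : d a != 0 by rewrite -(supp_d u du).
have Esupp : finsupp d = [fset a]%fset.
  apply/fsetP => x; rewrite in_fset1 mem_finsupp.
  by apply/idP/eqP => [/supp_d | ->].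
have ua : d a \is a GRing.unit.
  by apply/unitrPr; exists (c (z - a)); rewrite -dcz gmulE Esupp big_seq_fset1.
exists [fsfun x in [fset - a]%fset => (d a)^-1 | 0].
apply/fsfunP => x; rewrite gmulE Esupp big_seq_fset1 fsfunE in_fset1 goneE.
by rewrite subr_eq addNr; case: (x == 0); rewrite ?mulrV ?mulr0.
Qed.
End Evaluation.

Lemma ltxi_mapD (I : Type) (l : seq I) (f g h : I -> int) :
  ([seq f i | i <- l] < [seq g i | i <- l] :> seqlexi int)%O ->
  ([seq f i + h i | i <- l] < [seq g i + h i | i <- l] :> seqlexi int)%O.
Proof.
elim: l => [|i l IHl] //=; rewrite !ltxi_cons lerD2r.
by case/andP=> -> /implyP fg; apply/implyP; rewrite lerD2r => /fg /IHl.
Qed.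

Lemma seq_argmax (T : eqType) disp (O : orderType disp) (key : T -> O) (s : seq T) :
  s != [::] -> exists2 a, a \in s & forall u, u \in s -> (key u <= key a)%O.
Proof.
elim: s => [|x s IHs] // _; case: (eqVneq s [::]) => [-> | /IHs [a ain amax]].
  by exists x => [|u]; rewrite inE // => /eqP ->.
have [xa | ax] := leP (key x) (key a).
  by exists a => [|u]; rewrite inE ?ain ?orbT // => /orP[/eqP -> | /amax].
exists x => [|u]; rewrite inE ?eqxx // => /orP[/eqP -> // | /amax ua].
exact: le_trans ua (ltW ax).
Qed.

Section LeadingTerm.
Variables (n : nat) (disp : Order.disp_t) (O : orderType disp) (key : FAb n -> O).
Hypothesis key_inj : injective key.
Hypothesis key_ltD : forall x y w, (key x < key y)%O -> (key (x + w) < key (y + w))%O.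

Lemma supp_argmax (d : ZG n) x : d x != 0 ->
  exists2 a, d a != 0 & forall u, d u != 0 -> (key u <= key a)%O.
Proof.
move=> dx; have : (finsupp d : seq _) != [::].
  apply: contraTneq dx => supp0.
  by rewrite -mem_finsupp -[_ \in _]/(x \in (finsupp d : seq _)) supp0.
case/(seq_argmax key) => a; rewrite mem_finsupp => da amax.
by exists a => // u du; apply: amax; rewrite mem_finsupp.
Qed.

(* The product of the leading terms of d and c does not cancel in dc:
   every other pair u + v = a + b has key u < key a, hence key v > key b. *)
Lemma gmul_top (d c : ZG n) a b : d a != 0 ->
  (forall u, d u != 0 -> (key u <= key a)%O) ->
  (forall v, c v != 0 -> (key v <= key b)%O) ->
  gmul d c (a + b) = d a * c b.
Proof.
move=> da amax bmax.
rewrite gmulE (bigD1_seq a) ?mem_finsupp ?fset_uniq //= addrAC subrr add0r.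
rewrite big_seq_cond big1 ?addr0 // => u /andP[ud ua].
case: (eqVneq (c (a + b - u)) 0) => [-> | cu]; first by rewrite mulr0.
suff : (key b < key b)%O by rewrite ltxx.
have ltua : (key u < key a)%O.
  by rewrite lt_neqAle amax -?mem_finsupp // andbT (inj_eq key_inj).
have := key_ltD (b - u) ltua; rewrite addrC subrK addrA => /lt_le_trans; apply.
exact: bmax.
Qed.
End LeadingTerm.

(* An additive functional phi : G -> Z refined lexicographically by the
   coordinates gives a translation-invariant total order on G whose maxima
   maximize phi. *)
Section FunctionalOrder.
Variables (n : nat) (phi : FAb n -> int).
Hypothesis phiD : forall x y, phi (x + y) = phi x + phi y.

Definition phi_coord (x : FAb n) (i : option 'I_n) : int :=
  if i is Some j then x ord0 j else phi x.

Definition phi_key (x : FAb n) : seqlexi int :=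
  [seq phi_coord x i | i <- None :: map Some (enum 'I_n)].

Lemma phi_key_inj : injective phi_key.
Proof.
move=> x y /eq_in_map Exy; apply/matrixP => i j; rewrite (ord1 i).
by apply: (Exy (Some j)); rewrite inE map_f ?mem_enum.
Qed.

Lemma phi_key_ltD x y w :
  (phi_key x < phi_key y)%O -> (phi_key (x + w) < phi_key (y + w))%O.
Proof.
move/(ltxi_mapD (phi_coord w)); congr (_ < _)%O; apply: eq_map => -[j|] /=;
  by rewrite ?mxE ?phiD.
Qed.

Lemma phi_key_le x y : (phi_key x <= phi_key y)%O -> phi x <= phi y.
Proof. by rewrite lexi_cons => /andP[]. Qed.

Lemma max_levels_cancel (d c f : ZG n) z0 : gmul d c = f -> f z0 != 0 ->
  (forall z, f z != 0 -> phi z = 0) ->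
  exists a b, [/\ phi a + phi b = 0,
    forall u, d u != 0 -> phi u <= phi a & forall v, c v != 0 -> phi v <= phi b].
Proof.
move=> Ef fz0 f_ker; have [u du cu] : exists2 u, d u != 0 & c (z0 - u) != 0.
  by apply: gmul_neq0; rewrite Ef.
have [a da amax] := supp_argmax phi_key du.
have [b cb bmax] := supp_argmax phi_key cu.
exists a, b; split => [|v /amax /phi_key_le // | v /bmax /phi_key_le //].
rewrite -phiD f_ker // -Ef (gmul_top phi_key_inj phi_key_ltD) //.
by rewrite mulf_neq0.
Qed.
End FunctionalOrder.

(* By the previous lemma for phi and for -phi,
   max_d phi + max_c phi = 0 = min_d phi + min_c phi, so max_d phi = min_d phi. *)
Lemma level_supp n (phi : FAb n -> int) (d c f : ZG n) z0 :
  (forall x y, phi (x + y) = phi x + phi y) ->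
  gmul d c = f -> f z0 != 0 -> (forall z, f z != 0 -> phi z = 0) ->
  forall x y, d x != 0 -> d y != 0 -> phi x = phi y.
Proof.
move=> phiD Ef fz0 f_ker x y dx dy.
have [a [b [Eab amax bmax]]] := max_levels_cancel phiD Ef fz0 f_ker.
have phiND u v : - phi (u + v) = - phi u + - phi v by rewrite phiD opprD.
have f_kerN z : f z != 0 -> - phi z = 0 by move/f_ker ->.
have [a' [b' [Eab' amin bmin]]] := max_levels_cancel phiND Ef fz0 f_kerN.
have := amax _ dx; have := amax _ dy; have := amin _ dx; have := amin _ dy.
have [v _ cv] : exists2 u, d u != 0 & c (z0 - u) != 0.
  by apply: gmul_neq0; rewrite Ef.
have := bmax _ cv; have := bmin _ cv; move: Eab Eab'; lia.
Qed.

Section Binomials.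
Variable n : nat.
Implicit Types (g v x y z : FAb n) (d c : ZG n).

Lemma onepmE s g z : onepm s g z =
  (z == 0)%:R + (if s then (z == g)%:R else - (z == g)%:R).
Proof.
rewrite /onepm gaddE goneE.
by case: s; rewrite ?goppE gdeltaE; case: (z == 0); case: (z == g).
Qed.

Lemma onepm0 s g : g != 0 -> onepm s g 0 = 1.
Proof.
by move=> g0; rewrite onepmE eqxx eq_sym (negPf g0); case: s; rewrite ?oppr0 addr0.
Qed.

Lemma onepm_supp s g z : onepm s g z != 0 -> z = 0 \/ z = g.
Proof.
rewrite onepmE; have [-> | z0] := eqVneq z 0; first by left.
by have [-> | zg] := eqVneq z g; [right | case: s; rewrite ?oppr0 addr0 eqxx].
Qed.

Definition parallel g v : Prop :=
  forall i j, g ord0 i * v ord0 j = g ord0 j * v ord0 i.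

(* Any two support points of a divisor of 1 ± [g] differ by a vector
   parallel to g: apply the level lemma to each minor z |-> g_i z_j - g_j z_i,
   which vanishes on supp (1 ± [g]) = {0, g}. *)
Lemma divisor_supp_parallel s g d c x y : g != 0 -> gmul d c = onepm s g ->
  d x != 0 -> d y != 0 -> parallel g (x - y).
Proof.
move=> g0 Edc dx dy i j.
pose phi z := g ord0 i * z ord0 j - g ord0 j * z ord0 i.
have phiD z w : phi (z + w) = phi z + phi w by rewrite /phi !mxE; ring.
have phi_supp z : onepm s g z != 0 -> phi z = 0.
  by case/onepm_supp => ->; rewrite /phi ?mxE; ring.
have f0 : onepm s g 0 != 0 by rewrite onepm0 // oner_neq0.
have Exy := level_supp phiD Edc f0 phi_supp dx dy.
apply/eqP; rewrite -subr_eq0 -[_ - _]/(phi (x - y)) phiD Exy.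
by rewrite -phiD subrr /phi !mxE !mulr0 subrr.
Qed.

(* Only the zero vector is parallel to two linearly independent vectors:
   if v_k != 0, then h_k g - g_k h = 0, forcing g_k = 0 and then g = 0. *)
Lemma parallel_rank2 g h v : rank2 g h -> parallel g v -> parallel h v -> v = 0.
Proof.
move=> rk gv hv; apply/matrixP => i k; rewrite (ord1 i) mxE.
apply/eqP/negPn/negP => vk.
have dep : h ord0 k *: g + (- g ord0 k) *: h = 0.
  apply/matrixP => i' j; rewrite (ord1 i') !mxE; apply: (mulIf vk).
  by rewrite mul0r mulrDl -!mulrA gv hv; ring.
have [_ /eqP] := rk _ _ dep; rewrite oppr_eq0 => /eqP gk0.
have g0 : g = 0.
  apply/matrixP => i' j; rewrite (ord1 i') mxE; apply: (mulIf vk).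
  by rewrite mul0r gv gk0 mul0r.
by move: (rk 1 0); rewrite g0 scaler0 scale0r addr0 => /(_ erefl) [].
Qed.

Lemma rank2_neq0 g h : rank2 g h -> g != 0 /\ h != 0.
Proof.
move=> rk; split; apply/eqP => E.
  by move: (rk 1 0); rewrite E scaler0 scale0r addr0 => /(_ erefl) [].
by move: (rk 0 1); rewrite E scaler0 scale0r add0r => /(_ erefl) [].
Qed.
End Binomials.

Theorem mainTheorem17 (n : nat) (g h : FAb n) :
  rank2 g h -> forall s t : bool, grelprime (onepm s g) (onepm t h).
Proof.
move=> rk s t d [c Edc] [c' Edc'].
have [g0 h0] := rank2_neq0 rk.
have dc0 : gmul d c 0 = 1 by rewrite Edc onepm0.
have [a da _] : exists2 a, d a != 0 & c (0 - a) != 0.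
  by apply: gmul_neq0; rewrite dc0 oner_neq0.
(* d is a monomial: its support points differ by vectors parallel to g and h *)
apply: (monomial_gunit (a := a) _ dc0) => x dx; apply/eqP; rewrite -subr_eq0.
apply/eqP/(parallel_rank2 rk).
- exact: divisor_supp_parallel g0 Edc dx da.
- exact: divisor_supp_parallel h0 Edc' dx da.
Qed.
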